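(* Let $M\models\mathrm{AA}$ and let $D\subseteq M$ be formula-definable. Assume $0\in D$ and $d(x+1,D)\le d(x,D)$ for all $x\in M$. Then $D=M$.
   Context: Structures are complete metric spaces of diameter at most $1$ in the language $L=\{+,\cdot,\wedge,\vee,0,1\}$ (operations $1$-Lipschitz, $d$ the only relation symbol). Affine formulas are built from $1$ and atomic formulas $d(t_1,t_2)$ using $+$, scalar multiplication by reals, $\sup_x$, $\inf_x$. $\mathrm{AA}$ is the set of all closed affine conditions true in every model of first-order Peano arithmetic (formulated in $L$ with lattice operations min/max and discrete metric). A closed set $D\subseteq M$ is formula-definable if there is an affine formula $\phi(x)$ with parameters from $M$ such that $d(x,D)=\inf_{y\in D}d(x,y)=\phi^M(x)$ for all $x\in M$. *)

From mathcomp Require Import all_boot all_order all_algebra.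
From mathcomp Require Import all_classical all_reals.
From mathcomp Require Import Rstruct.
Set Implicit Arguments. Unset Strict Implicit. Unset Printing Implicit Defensive.
Import Order.TTheory GRing.Theory Num.Theory.
Local Open Scope classical_set_scope.
Local Open Scope ring_scope.

Notation R := Rdefinitions.R.

Inductive term : Type :=
| TVar  : nat -> term
| TZero : term
| TOne  : term
| TAdd  : term -> term -> term
| TMul  : term -> term -> term
| TMeet : term -> term -> term
| TJoin : term -> term -> term.

(* Affine formulas: 1, d(t1,t2), +, scalar multiplication by reals,
   sup_x, inf_x (the quantifiers bind de Bruijn variable 0). *)
Inductive aformula : Type :=
| AOne   : aformula
| ADist  : term -> term -> aformula
| AAdd   : aformula -> aformula -> aformula
| AScale : R -> aformula -> aformula
| ASup   : aformula -> aformula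
| AInf   : aformula -> aformula.

Fixpoint tclosed_at (k : nat) (t : term) : bool :=
  match t with
  | TVar n => (n < k)%N
  | TZero | TOne => true
  | TAdd a b | TMul a b | TMeet a b | TJoin a b => tclosed_at k a && tclosed_at k b
  end.

Fixpoint aclosed_at (k : nat) (f : aformula) : bool :=
  match f with
  | AOne => true
  | ADist a b => tclosed_at k a && tclosed_at k b
  | AAdd a b => aclosed_at k a && aclosed_at k b
  | AScale _ a => aclosed_at k a
  | ASup a | AInf a => aclosed_at k.+1 a
  end.

Definition asentence (f : aformula) : bool := aclosed_at 0 f.

(* L-structures: complete metric spaces of diameter <= 1 with
   1-Lipschitz operations (product spaces carry the max metric). *)
Record AStruct : Type := {
  carrier :> Type;
  dist : carrier -> carrier -> R;
  s_zero : carrier;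
  s_one : carrier;
  s_add : carrier -> carrier -> carrier;
  s_mul : carrier -> carrier -> carrier;
  s_meet : carrier -> carrier -> carrier;
  s_join : carrier -> carrier -> carrier;
  dist_ge0 : forall x y, 0 <= dist x y;
  dist_le1 : forall x y, dist x y <= 1;
  dist_eq0 : forall x y, dist x y = 0 <-> x = y;
  dist_sym : forall x y, dist x y = dist y x;
  dist_tri : forall x y z, dist x z <= dist x y + dist y z;
  dist_complete : forall u : nat -> carrier,
    (forall eps : R, 0 < eps -> exists N : nat, forall m n : nat,
        (N <= m)%N -> (N <= n)%N -> dist (u m) (u n) < eps) ->
    exists l : carrier, forall eps : R, 0 < eps -> exists N : nat,
        forall n : nat, (N <= n)%N -> dist (u n) l < eps;
  add_lip : forall x x' y y',
    dist (s_add x y) (s_add x' y') <= Num.max (dist x x') (dist y y');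
  mul_lip : forall x x' y y',
    dist (s_mul x y) (s_mul x' y') <= Num.max (dist x x') (dist y y');
  meet_lip : forall x x' y y',
    dist (s_meet x y) (s_meet x' y') <= Num.max (dist x x') (dist y y');
  join_lip : forall x x' y y',
    dist (s_join x y) (s_join x' y') <= Num.max (dist x x') (dist y y')
}.

Definition scons {T : Type} (x : T) (e : nat -> T) : nat -> T :=
  fun n => match n with O => x | S k => e k end.

Fixpoint teval (M : AStruct) (e : nat -> M) (t : term) : M :=
  match t with
  | TVar n => e n
  | TZero => s_zero M
  | TOne => s_one M
  | TAdd a b => s_add (teval e a) (teval e b)
  | TMul a b => s_mul (teval e a) (teval e b)
  | TMeet a b => s_meet (teval e a) (teval e b)
  | TJoin a b => s_join (teval e a) (teval e b)
  end.

(* value phi^M[e] of an affine formula (sup / inf over the nonempty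
   carrier of a bounded family, using the real supremum/infimum) *)
Fixpoint aeval (M : AStruct) (e : nat -> M) (f : aformula) : R :=
  match f with
  | AOne => 1
  | ADist a b => dist (teval e a) (teval e b)
  | AAdd a b => aeval e a + aeval e b
  | AScale r a => r * aeval e a
  | ASup a => sup [set aeval (scons x e) a | x in [set: carrier M]]
  | AInf a => inf [set aeval (scons x e) a | x in [set: carrier M]]
  end.

(* A closed affine condition is "phi >= 0" for a sentence phi (conditions
   phi <= 0, phi <= psi, phi = r are expressible by such ones). *)
Definition holds (M : AStruct) (f : aformula) : Prop :=
  forall e : nat -> M, 0 <= aeval e f.

(* First-order (classical, two-valued) formulas in the language L,
   used to state the induction schema of PA. *)
Inductive foformula : Type :=
| FEq  : term -> term -> foformula
| FBot : foformula
| FImp : foformula -> foformula -> foformula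
| FAll : foformula -> foformula.

Fixpoint fsat (M : AStruct) (e : nat -> M) (f : foformula) : Prop :=
  match f with
  | FEq a b => teval e a = teval e b
  | FBot => False
  | FImp a b => fsat e a -> fsat e b
  | FAll a => forall x : M, fsat (scons x e) a
  end.

Definition pa_le (M : AStruct) (x y : M) : Prop := exists z, s_add x z = y.

(* M is a model of first-order Peano arithmetic, formulated in L with the
   lattice operations min/max (w.r.t. the order of PA) and the discrete metric. *)
Definition is_PA_model (M : AStruct) : Prop :=
  (forall x y : M, x <> y -> dist x y = 1) /\
  (forall x : M, s_add x (s_one M) <> s_zero M) /\
  (forall x y : M, s_add x (s_one M) = s_add y (s_one M) -> x = y) /\
  (forall x : M, s_add x (s_zero M) = x) /\
  (forall x y : M, s_add x (s_add y (s_one M)) = s_add (s_add x y) (s_one M)) /\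
  (forall x : M, s_mul x (s_zero M) = s_zero M) /\
  (forall x y : M, s_mul x (s_add y (s_one M)) = s_add (s_mul x y) x) /\
  (* induction schema (variable 0 is the induction variable, the other
     free variables are parameters) *)
  (forall (phi : foformula) (e : nat -> M),
      fsat (scons (s_zero M) e) phi ->
      (forall x : M, fsat (scons x e) phi -> fsat (scons (s_add x (s_one M)) e) phi) ->
      forall x : M, fsat (scons x e) phi) /\
  (forall x y : M, (pa_le x y -> s_meet x y = x) /\ (pa_le y x -> s_meet x y = y)) /\
  (forall x y : M, (pa_le x y -> s_join x y = y) /\ (pa_le y x -> s_join x y = x)).

Definition in_AA (f : aformula) : Prop :=
  asentence f /\ forall N : AStruct, is_PA_model N -> holds N f.

Definition models_AA (M : AStruct) : Prop :=
  forall f : aformula, in_AA f -> holds M f.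

Definition dist_set (M : AStruct) (D : set M) (x : M) : R :=
  inf [set dist x y | y in D].

Definition closed_set (M : AStruct) (D : set M) : Prop :=
  forall x : M, (forall eps : R, 0 < eps -> exists2 y, D y & dist x y < eps) -> D x.

(* d(x,D) = phi^M(x, a) for an affine formula phi whose free variable 0 is x
   and whose other free variables are interpreted by parameters a from M *)
Definition formula_definable (M : AStruct) (D : set M) : Prop :=
  closed_set D /\
  exists (phi : aformula) (a : nat -> M),
    forall x : M, dist_set D x = aeval (scons x a) phi.

From mathcomp Require Import all_boot all_order all_algebra.
From mathcomp Require Import all_classical all_reals.
From mathcomp Require Import Rstruct lra.
Set Implicit Arguments. Unset Strict Implicit. Unset Printing Implicit Defensive.
Import Order.TTheory GRing.Theory Num.Theory.
Local Open Scope classical_set_scope.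
Local Open Scope ring_scope.

(* In a model of PA the metric is discrete, so an affine formula phi(x) takes
   only finitely many values (least positive gap delta), and every condition
   "phi(x) <= c" is expressed by a first-order formula.  By the induction
   schema, if phi(x+1) <= phi(x) for all x then phi is maximal at 0; otherwise
   some step raises phi by at least delta.  With B a bound for |phi|, both
   cases give the affine condition
     (2B / delta) * sup_x (phi(x+1) - phi(x)) >= sup_x phi(x) - phi(0),
   whose universal closure therefore belongs to AA.  In M, for
   phi(x) = d(x, D), the hypotheses make the left side <= 0 and phi(0) = 0,
   so d(x, D) <= 0 for all x, and D = M since D is closed. *)

Lemma sup_maximum (S : set R) m : S m -> ubound S m -> sup S = m.
Proof.
move=> Sm ubm; apply/le_anti; rewrite ge_sup //=; last by exists m.
by apply: ub_le_sup; first by exists m.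
Qed.

Lemma inf_minimum (S : set R) m : S m -> lbound S m -> inf S = m.
Proof.
move=> Sm lbm; apply/le_anti; rewrite lb_le_inf ?andbT //; last by exists m.
by apply: ge_inf; first by exists m.
Qed.

Section FiniteRange.
Variables (T : Type) (x0 : T) (g : T -> R) (l : seq R).
Hypothesis g_in : forall x, g x \in l.

Lemma finite_range_max : exists x, forall y, g y <= g x.
Proof.
pose m := \big[Num.max/g x0]_(v <- l | `[< exists x, g x = v >]) v.
have [x gx] : exists x, g x = m.
  apply: (big_ind (fun v => exists x, g x = v)) => [|_ _ [x <-] [y <-]|v /asboolP//].
  - by exists x0.
  - by rewrite maxEle; case: ifP; [exists y|exists x].
by exists x => y; rewrite gx; apply: le_bigmax_seq => //; apply/asboolP; exists y.
Qed.

Lemma finite_range_min : exists x, forall y, g x <= g y.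
Proof.
pose m := \big[Num.min/g x0]_(v <- l | `[< exists x, g x = v >]) v.
have [x gx] : exists x, g x = m.
  apply: (big_ind (fun v => exists x, g x = v)) => [|_ _ [x <-] [y <-]|v /asboolP//].
  - by exists x0.
  - by rewrite minEle; case: ifP; [exists x|exists y].
by exists x => y; rewrite gx; apply: ge_bigmin_seq => //; apply/asboolP; exists y.
Qed.

Lemma finite_range_supP v :
  sup (range g) = v <-> (exists x, g x = v) /\ (forall x, g x <= v).
Proof.
split=> [<-|[[x <-] ub]]; last by apply: sup_maximum => [|_ [y _ <-]]; [exists x|].
have [x ub] := finite_range_max.
have -> : sup (range g) = g x by apply: sup_maximum => [|_ [y _ <-]]; [exists x|].
by split; first exists x.
Qed.

Lemma finite_range_infP v :
  inf (range g) = v <-> (exists x, g x = v) /\ (forall x, v <= g x).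
Proof.
split=> [<-|[[x <-] lb]]; last by apply: inf_minimum => [|_ [y _ <-]]; [exists x|].
have [x lb] := finite_range_min.
have -> : inf (range g) = g x by apply: inf_minimum => [|_ [y _ <-]]; [exists x|].
by split; first exists x.
Qed.

End FiniteRange.

Section BoundedRange.
Variables (T : Type) (x0 : T) (g : T -> R) (b : R).
Hypothesis g_bounded : forall x, `|g x| <= b.

Let range_ub : ubound (range g) b.
Proof. by move=> _ [x _ <-]; rewrite (le_trans (ler_norm _)). Qed.

Let range_lb : lbound (range g) (- b).
Proof. by move=> _ [x _ <-]; rewrite lerNl (le_trans (ler_norm _)) // normrN. Qed.

Lemma le_sup_range x : g x <= sup (range g).
Proof. by apply: ub_le_sup; [exists b|exists x]. Qed.

Lemma inf_range_le x : inf (range g) <= g x.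
Proof. by apply: ge_inf; [exists (- b)|exists x]. Qed.

Lemma normr_sup_range_le : `|sup (range g)| <= b.
Proof.
rewrite ler_norml ge_sup ?andbT //; last by exists (g x0), x0.
by rewrite (le_trans _ (le_sup_range x0)) //; apply: range_lb; exists x0.
Qed.

Lemma normr_inf_range_le : `|inf (range g)| <= b.
Proof.
rewrite ler_norml lb_le_inf //=; last by exists (g x0), x0.
by rewrite (le_trans (inf_range_le x0)) //; apply: range_ub; exists x0.
Qed.

End BoundedRange.

Fixpoint abound (f : aformula) : R :=
  match f with
  | AOne | ADist _ _ => 1
  | AAdd a b => abound a + abound b
  | AScale r a => `|r| * abound a
  | ASup a | AInf a => abound a
  end.

Lemma abound_ge0 f : 0 <= abound f.
Proof. by elim: f => //= [a ? b ?|r a ?]; rewrite ?addr_ge0 ?mulr_ge0. Qed.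

Section AffineBounds.
Variable M : AStruct.
Implicit Types (e : nat -> M) (f : aformula).

Lemma normr_aeval_le e f : `|aeval e f| <= abound f.
Proof.
elim: f e => [|t1 t2|a IHa b IHb|r a IHa|a IHa|a IHa] e /=.
- by rewrite normr1.
- by rewrite ger0_norm ?dist_ge0 ?dist_le1.
- by rewrite (le_trans (ler_normD _ _)) ?lerD.
- by rewrite normrM ler_wpM2l.
- exact: (normr_sup_range_le (s_zero M)).
- exact: (normr_inf_range_le (s_zero M)).
Qed.

Lemma aeval_le_sup e f x : aeval (scons x e) f <= aeval e (ASup f).
Proof.
exact: (le_sup_range (g := fun y => aeval (scons y e) f)
                      (fun y => normr_aeval_le (scons y e) f)).
Qed.

Lemma aeval_inf_le e f x : aeval e (AInf f) <= aeval (scons x e) f.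
Proof.
exact: (inf_range_le (g := fun y => aeval (scons y e) f)
                      (fun y => normr_aeval_le (scons y e) f)).
Qed.

End AffineBounds.

Definition FTrue := FImp FBot FBot.
Definition FNot a := FImp a FBot.
Definition FOr a b := FImp (FNot a) b.
Definition FAnd a b := FNot (FImp a (FNot b)).
Definition FEx a := FNot (FAll (FNot a)).
Definition FBigOr (l : seq foformula) := foldr FOr FBot l.

Section FirstOrderConnectives.
Variable M : AStruct.
Implicit Types (e : nat -> M) (a b : foformula).

Lemma fsat_or e a b : fsat e (FOr a b) <-> fsat e a \/ fsat e b.
Proof. by split=> [|[h|h] //= /(_ h)]; case: (pselect (fsat e a)) => /=; auto. Qed.

Lemma fsat_and e a b : fsat e (FAnd a b) <-> fsat e a /\ fsat e b.
Proof.
split=> [|[ha hb] /= /(_ ha)]; last exact.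
by case: (pselect (fsat e a)); case: (pselect (fsat e b)) => /=; tauto.
Qed.

Lemma fsat_ex e a : fsat e (FEx a) <-> exists x, fsat (scons x e) a.
Proof.
split=> [/= h|[x hx] /(_ x)]; last exact.
by apply: contra_notP h => nex x hx; apply: nex; exists x.
Qed.

Lemma fsat_bigor (T : eqType) e (F : T -> foformula) (s : seq T) :
  fsat e (FBigOr (map F s)) <-> exists2 x, x \in s & fsat e (F x).
Proof.
elim: s => [|y s IH]; first by split=> // [[]].
rewrite -[FBigOr _]/(FOr (F y) (FBigOr (map F s))) fsat_or IH.
split=> [[h|[x xs h]]|[x]]; first by exists y; rewrite ?mem_head.
  by exists x; rewrite // in_cons xs orbT.
by rewrite in_cons => /predU1P[->|xs h]; [left|right; exists x].
Qed.

End FirstOrderConnectives.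

Definition discrete_metric (M : AStruct) := forall x y : M, x <> y -> dist x y = 1.

Fixpoint avalues (f : aformula) : seq R :=
  match f with
  | AOne => [:: 1]
  | ADist _ _ => [:: 0; 1]
  | AAdd a b => [seq u + w | u <- avalues a, w <- avalues b]
  | AScale r a => [seq r * u | u <- avalues a]
  | ASup a | AInf a => avalues a
  end.

Fixpoint value_formula (f : aformula) (P : pred R) : foformula :=
  match f with
  | AOne => if P 1 then FTrue else FBot
  | ADist t1 t2 =>
      FOr (if P 0 then FEq t1 t2 else FBot) (if P 1 then FNot (FEq t1 t2) else FBot)
  | AAdd a b =>
      FBigOr [seq FAnd (value_formula a (pred1 p.1)) (value_formula b (pred1 p.2))
             | p <- [seq (u, w) | u <- avalues a, w <- avalues b] & P (p.1 + p.2)]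
  | AScale r a => FBigOr [seq value_formula a (pred1 u) | u <- avalues a & P (r * u)]
  | ASup a =>
      FBigOr [seq FAnd (FEx (value_formula a (pred1 v)))
                       (FAll (value_formula a (fun u => u <= v))) | v <- avalues a & P v]
  | AInf a =>
      FBigOr [seq FAnd (FEx (value_formula a (pred1 v)))
                       (FAll (value_formula a (fun u => v <= u))) | v <- avalues a & P v]
  end.

Section DiscreteStructure.
Variable M : AStruct.
Hypothesis M_discrete : discrete_metric M.
Implicit Types (e : nat -> M) (f : aformula).

Lemma dist_discreteE (x y : M) : dist x y = if `[< x = y >] then 0 else 1.
Proof. by case: asboolP => [->|/M_discrete //]; apply/dist_eq0. Qed.

Lemma aeval_in_values e f : aeval e f \in avalues f.
Proof.
elim: f e => [|t1 t2|a IHa b IHb|r a IHa|a IHa|a IHa] e /=.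
- exact: mem_head.
- by rewrite dist_discreteE; case: asboolP; rewrite !inE eqxx ?orbT.
- exact: allpairs_f.
- exact: map_f.
- have gV x := IHa (scons x e).
  by have [[x <-] _] := (finite_range_supP (s_zero M) gV _).1 erefl.
- have gV x := IHa (scons x e).
  by have [[x <-] _] := (finite_range_infP (s_zero M) gV _).1 erefl.
Qed.

Lemma fsat_value_formula f P e : fsat e (value_formula f P) <-> P (aeval e f).
Proof.
elim: f P e => [|t1 t2|a IHa b IHb|r a IHa|a IHa|a IHa] P e.
- by rewrite /=; case: ifP => _; split=> //= _ [].
- rewrite [value_formula _ _]/= fsat_or /= dist_discreteE.
  by case: asboolP => h; case: (P 0); case: (P 1) => /=; split=> //; tauto.
- rewrite [value_formula _ _]/= [aeval _ _]/= fsat_bigor; split=> [[[u w]]|Pab].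
    by rewrite mem_filter => /andP[Puw _] /fsat_and[/IHa/eqP-> /IHb/eqP->].
  exists (aeval e a, aeval e b).
    by rewrite mem_filter /= Pab; apply: allpairs_f; apply: aeval_in_values.
  by apply/fsat_and; split; [apply/IHa|apply/IHb]; rewrite /= eqxx.
- rewrite [value_formula _ _]/= [aeval _ _]/= fsat_bigor; split=> [[u]|Pa].
    by rewrite mem_filter => /andP[Pu _] /IHa/eqP->.
  by exists (aeval e a); [rewrite mem_filter Pa aeval_in_values|apply/IHa; rewrite /= eqxx].
- have gV x := aeval_in_values (scons x e) a.
  rewrite [value_formula _ _]/= fsat_bigor; split=> [[v]|Psup].
    rewrite mem_filter => /andP[Pv _] /fsat_and[/fsat_ex[x /IHa/eqP gx] ub].
    suff -> : aeval e (ASup a) = v by [].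
    apply/(finite_range_supP (s_zero M) gV); split=> [|y]; first by exists x.
    exact: (IHa (fun u => u <= v) _).1 (ub y).
  exists (aeval e (ASup a)); first by rewrite mem_filter Psup aeval_in_values.
  have [[x gx] ub] := (finite_range_supP (s_zero M) gV _).1 erefl.
  apply/fsat_and; split=> [|y]; last exact/IHa.
  by apply/fsat_ex; exists x; apply/IHa; rewrite /= gx.
- have gV x := aeval_in_values (scons x e) a.
  rewrite [value_formula _ _]/= fsat_bigor; split=> [[v]|Pinf].
    rewrite mem_filter => /andP[Pv _] /fsat_and[/fsat_ex[x /IHa/eqP gx] lb].
    suff -> : aeval e (AInf a) = v by [].
    apply/(finite_range_infP (s_zero M) gV); split=> [|y]; first by exists x.
    exact: (IHa (fun u => v <= u) _).1 (lb y).
  exists (aeval e (AInf a)); first by rewrite mem_filter Pinf aeval_in_values.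
  have [[x gx] lb] := (finite_range_infP (s_zero M) gV _).1 erefl.
  apply/fsat_and; split=> [|y]; last exact/IHa.
  by apply/fsat_ex; exists x; apply/IHa; rewrite /= gx.
Qed.

End DiscreteStructure.

Fixpoint trename (r : nat -> nat) (t : term) : term :=
  match t with
  | TVar n => TVar (r n)
  | TZero => TZero
  | TOne => TOne
  | TAdd a b => TAdd (trename r a) (trename r b)
  | TMul a b => TMul (trename r a) (trename r b)
  | TMeet a b => TMeet (trename r a) (trename r b)
  | TJoin a b => TJoin (trename r a) (trename r b)
  end.

(* Every variable of [s] stands for the variable [k] being replaced, so [s]
   needs no shifting when the substitution passes a binder. *)
Fixpoint tsubst (s : term) (k : nat) (t : term) : term :=
  match t with
  | TVar n => if n == k then trename (fun=> n) s else TVar n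
  | TZero => TZero
  | TOne => TOne
  | TAdd a b => TAdd (tsubst s k a) (tsubst s k b)
  | TMul a b => TMul (tsubst s k a) (tsubst s k b)
  | TMeet a b => TMeet (tsubst s k a) (tsubst s k b)
  | TJoin a b => TJoin (tsubst s k a) (tsubst s k b)
  end.

Fixpoint asubst (s : term) (k : nat) (f : aformula) : aformula :=
  match f with
  | AOne => AOne
  | ADist a b => ADist (tsubst s k a) (tsubst s k b)
  | AAdd a b => AAdd (asubst s k a) (asubst s k b)
  | AScale r a => AScale r (asubst s k a)
  | ASup a => ASup (asubst s k.+1 a)
  | AInf a => AInf (asubst s k.+1 a)
  end.

Section Substitution.
Variable M : AStruct.
Implicit Types (e : nat -> M) (t s : term) (f : aformula).

Lemma teval_rename e r t : teval e (trename r t) = teval (e \o r) t.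
Proof. by elim: t => //= [a -> b ->|a -> b ->|a -> b ->|a -> b ->]. Qed.

Lemma teval_subst e s k t :
  teval e (tsubst s k t) = teval [eta e with k |-> teval (fun=> e k) s] t.
Proof.
elim: t => //= [n|a -> b ->|a -> b ->|a -> b ->|a -> b ->] //.
by case: eqP => [->|//]; rewrite teval_rename.
Qed.

Lemma aeval_subst e s k f :
  aeval e (asubst s k f) = aeval [eta e with k |-> teval (fun=> e k) s] f.
Proof.
elim: f e k => //= [t1 t2|a IHa b IHb|r a IHa|a IHa|a IHa] e k.
- by rewrite !teval_subst.
- by rewrite IHa IHb.
- by rewrite IHa.
- by congr sup; apply: eq_imagel => x _; rewrite IHa; congr aeval; apply: funext => -[|i].
- by congr inf; apply: eq_imagel => x _; rewrite IHa; congr aeval; apply: funext => -[|i].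
Qed.

Lemma aeval_subst0 e s f y :
  aeval (scons y e) (asubst s 0 f) = aeval (scons (teval (fun=> y) s) e) f.
Proof. by rewrite aeval_subst; congr aeval; apply: funext => -[|i]. Qed.

End Substitution.

Fixpoint tfv_bound (t : term) : nat :=
  match t with
  | TVar n => n.+1
  | TZero | TOne => 0
  | TAdd a b | TMul a b | TMeet a b | TJoin a b => maxn (tfv_bound a) (tfv_bound b)
  end.

Fixpoint afv_bound (f : aformula) : nat :=
  match f with
  | AOne => 0
  | ADist a b => maxn (tfv_bound a) (tfv_bound b)
  | AAdd a b => maxn (afv_bound a) (afv_bound b)
  | AScale _ a => afv_bound a
  | ASup a | AInf a => (afv_bound a).-1
  end.

Lemma tclosed_fv_bound t k : (tfv_bound t <= k)%N -> tclosed_at k t.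
Proof. by elim: t => //= [a IHa b IHb|a IHa b IHb|a IHa b IHb|a IHa b IHb];
  rewrite geq_max => /andP[/IHa -> /IHb ->]. Qed.

Lemma aclosed_fv_bound f k : (afv_bound f <= k)%N -> aclosed_at k f.
Proof.
elim: f k => [|t1 t2|a IHa b IHb|r a IHa|a IHa|a IHa] k //=.
- by rewrite geq_max => /andP[/tclosed_fv_bound -> /tclosed_fv_bound ->].
- by rewrite geq_max => /andP[/IHa -> /IHb ->].
- exact: IHa.
- by move=> h; apply: IHa; case: (afv_bound a) h.
- by move=> h; apply: IHa; case: (afv_bound a) h.
Qed.

Fixpoint infs (n : nat) (f : aformula) : aformula :=
  match n with O => f | S n => AInf (infs n f) end.

Definition aclosure (f : aformula) : aformula := infs (afv_bound f) f.

Lemma aclosed_infs n f k : aclosed_at (k + n) f -> aclosed_at k (infs n f).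
Proof. by elim: n k => [|n IH] k /=; [rewrite addn0|rewrite -addSnnS => /IH]. Qed.

Lemma asentence_aclosure f : asentence (aclosure f).
Proof. exact/aclosed_infs/aclosed_fv_bound. Qed.

Section Infs.
Variable M : AStruct.
Implicit Types (e : nat -> M) (f : aformula).

Lemma aeval_infs_ge0 n f : (forall e, 0 <= aeval e f) -> forall e, 0 <= aeval e (infs n f).
Proof.
move=> f_ge0; elim: n => [|n IH] e //=.
apply: lb_le_inf => [|_ [x _ <-]//].
by exists (aeval (scons (s_zero M) e) (infs n f)), (s_zero M).
Qed.

Lemma aeval_infs_le n f e : aeval (fun i => e (n + i)%N) (infs n f) <= aeval e f.
Proof.
elim: n e => [|n IH] e /=; first by rewrite (_ : (fun i => e i) = e).
apply: le_trans (aeval_inf_le _ _ (e n)) _.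
rewrite (_ : scons _ _ = fun i => e (n + i)%N) ?IH //.
by apply: funext => -[|i] /=; rewrite ?addn0 ?addnS.
Qed.

End Infs.

Lemma models_AA_ge0 (M : AStruct) (HM : models_AA M) f :
  (forall N : AStruct, is_PA_model N -> forall e : nat -> N, 0 <= aeval e f) ->
  forall e : nat -> M, 0 <= aeval e f.
Proof.
move=> PA_ge0 e; apply: le_trans (aeval_infs_le _ f e).
apply: HM; split=> [|N HN]; first exact: asentence_aclosure.
exact/aeval_infs_ge0/PA_ge0.
Qed.

Section PAModel.
Variable N : AStruct.
Hypothesis HN : is_PA_model N.
Implicit Types (e : nat -> N) (f : aformula).

Lemma PA_model_discrete : discrete_metric N.
Proof. by case: HN. Qed.

Lemma PA_model_induction phi e :
  fsat (scons (s_zero N) e) phi ->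
  (forall x, fsat (scons x e) phi -> fsat (scons (s_add x (s_one N)) e) phi) ->
  forall x, fsat (scons x e) phi.
Proof. by case: HN => _ [_ [_ [_ [_ [_ [_ [ind _]]]]]]]; apply: ind. Qed.

Lemma PA_nonincreasing_le_at_zero f e :
  (forall y, aeval (scons (s_add y (s_one N)) e) f <= aeval (scons y e) f) ->
  forall x, aeval (scons x e) f <= aeval (scons (s_zero N) e) f.
Proof.
move=> noninc.
pose le_value_at0 v := v <= aeval (scons (s_zero N) e) f.
have satP x := fsat_value_formula PA_model_discrete f le_value_at0 (scons x e).
move=> x; apply/satP; apply: PA_model_induction => [|y /satP le_y]; apply/satP.
  exact: lexx.
exact: le_trans (noninc y) le_y.
Qed.

End PAModel.

Definition min_gap (V : seq R) : R :=
  \big[Num.min/1]_(d <- [seq u - w | u <- V, w <- V] | 0 < d) d.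

Lemma min_gap_gt0 V : 0 < min_gap V.
Proof. by apply: (big_ind (fun d => 0 < d)) => // d1 d2; rewrite lt_min => -> ->. Qed.

Lemma min_gap_le V u w : u \in V -> w \in V -> w < u -> min_gap V <= u - w.
Proof. by move=> uV wV; rewrite -subr_gt0; apply: ge_bigmin_seq; apply: allpairs_f. Qed.

Definition induction_factor (f : aformula) : R :=
  (abound f + abound f) / min_gap (avalues f).

Lemma induction_factor_ge0 f : 0 <= induction_factor f.
Proof. by rewrite divr_ge0 ?addr_ge0 ?abound_ge0 ?ltW ?min_gap_gt0. Qed.

Definition affine_induction (f : aformula) : aformula :=
  AAdd (AScale (induction_factor f)
          (ASup (AAdd (asubst (TAdd (TVar 0) TOne) 0 f) (AScale (-1) f))))
       (AAdd (AScale (-1) (ASup f)) (ASup (asubst TZero 0 f))).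

Lemma aeval_affine_induction (M : AStruct) (e : nat -> M) f :
  let g x := aeval (scons x e) f in
  aeval e (affine_induction f) =
  induction_factor f * sup (range (fun y => g (s_add y (s_one M)) - g y))
  - sup (range g) + g (s_zero M).
Proof.
move=> g; rewrite /= mulN1r addrA; congr (_ * sup _ - _ + _).
- by apply: eq_imagel => y _; rewrite aeval_subst0 mulN1r.
- apply: sup_maximum => [|_ [y _ <-]]; last by rewrite aeval_subst0.
  by exists (s_zero M) => //; rewrite aeval_subst0.
Qed.

Lemma PA_affine_induction (N : AStruct) (HN : is_PA_model N) f (e : nat -> N) :
  0 <= aeval e (affine_induction f).
Proof.
pose g x := aeval (scons x e) f.
pose up := sup (range (fun y => g (s_add y (s_one N)) - g y)).
set K := induction_factor f; set B := abound f.
have -> : aeval e (affine_induction f) = K * up - sup (range g) + g (s_zero N).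
  exact: aeval_affine_induction.
have g_bnd x : `|g x| <= B := normr_aeval_le (scons x e) f.
have g_vals x : g x \in avalues f := aeval_in_values (PA_model_discrete HN) (scons x e) f.
have step_le_up y : g (s_add y (s_one N)) - g y <= up.
  apply: (le_sup_range (g := fun z => g (s_add z (s_one N)) - g z) (b := B + B)) => z.
  by rewrite (le_trans (ler_normB _ _)) ?lerD.
have K_ge0 : 0 <= K := induction_factor_ge0 f.
have [[y step_up]|no_step_up] :=
  pselect (exists y, g y < g (s_add y (s_one N))).
- have KgapE : K * min_gap (avalues f) = B + B.
    by rewrite /K /induction_factor -mulrA mulVf ?mulr1 // gt_eqF // min_gap_gt0.
  have up_ge : min_gap (avalues f) <= up.
    exact: le_trans (min_gap_le (g_vals _) (g_vals _) step_up) (step_le_up y).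
  have : B + B <= K * up by rewrite -KgapE ler_wpM2l.
  have : sup (range g) <= B.
    by apply: ge_sup => [|_ [x _ <-]]; [exists (g y), y|rewrite (le_trans (ler_norm _))].
  have : - B <= g (s_zero N) by rewrite lerNl (le_trans (ler_norm _)) // normrN.
  lra.
- have noninc y : g (s_add y (s_one N)) <= g y.
    by rewrite leNgt; apply/negP => lt; apply: no_step_up; exists y.
  have [[ymin ymin_eq] inf_le] := (finite_range_infP (s_zero N) g_vals _).1 erefl.
  have : 0 <= K * up.
    by rewrite mulr_ge0 // (le_trans _ (step_le_up ymin)) // subr_ge0 ymin_eq.
  have : sup (range g) <= g (s_zero N).
    apply: ge_sup => [|_ [x _ <-]]; first by exists (g ymin), ymin.
    exact: PA_nonincreasing_le_at_zero.
  lra.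
Qed.

Lemma AA_affine_induction (M : AStruct) (HM : models_AA M) f (e : nat -> M) :
  0 <= aeval e (affine_induction f).
Proof. exact: models_AA_ge0 HM _ (fun N HN => PA_affine_induction HN f) e. Qed.

Section DistanceToSet.
Variables (M : AStruct) (D : set M).

Lemma dist_set_mem x : D x -> dist_set D x = 0.
Proof.
move=> Dx; apply: inf_minimum => [|_ [y _ <-]]; last exact: dist_ge0.
by exists x => //; apply/dist_eq0.
Qed.

Lemma closed_set_dist_le0 x : closed_set D -> D !=set0 -> dist_set D x <= 0 -> D x.
Proof.
move=> Dclosed [y0 Dy0] x_le0; apply: Dclosed => eps eps_gt0.
have D_dist_ne0 : [set dist x y | y in D] !=set0 by exists (dist x y0), y0.
have [_ [y Dy <-] xy_lt] := inf_lt D_dist_ne0 (le_lt_trans x_le0 eps_gt0).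
by exists y.
Qed.

End DistanceToSet.

Theorem mainTheorem4 (M : AStruct) (HM : models_AA M) (D : set M)
  (HD : formula_definable D) (H0 : D (s_zero M))
  (Hstep : forall x : M, dist_set D (s_add x (s_one M)) <= dist_set D x) :
  D = [set: carrier M].
Proof.
case: HD => [Dclosed [phi [a phiE]]].
pose g x := aeval (scons x a) phi.
pose up := sup (range (fun y => g (s_add y (s_one M)) - g y)).
have up_le0 : up <= 0.
  apply: ge_sup => [|_ [y _ <-]]; first by eexists; exists (s_zero M).
  by rewrite subr_le0 /g -!phiE.
have g0 : g (s_zero M) = 0 by rewrite /g -phiE dist_set_mem.
have : 0 <= induction_factor phi * up - sup (range g) + g (s_zero M).
  have <- : aeval a (affine_induction phi) = _ := aeval_affine_induction a phi.
  exact: AA_affine_induction.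
have := mulr_ge0_le0 (induction_factor_ge0 phi) up_le0.
rewrite g0 => Kup_le0 ind; have sup_le0 : sup (range g) <= 0 by lra.
apply/seteqP; split=> // x _; apply: closed_set_dist_le0 => //; first by exists (s_zero M).
by rewrite phiE (le_trans (aeval_le_sup a phi x)).
Qed.
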